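(* Let $N_x, N_\omega \ge 1$, $\Delta t>0$, $T = N_\omega \Delta t$, $t_j = j\Delta t$ for $j=0,\dots,N_\omega-1$, and for $k = 0,\dots,N_\omega-1$ let $\omega_k = 2\pi\big(k - N_\omega\,\Theta(k - N_\omega/2)\big)/T$, where $\Theta(s)=0$ if $s<0$ and $\Theta(s)=1$ if $s\ge 0$. Let $A\in\mathbb{C}^{N_x\times N_x}$, $q_0\in\mathbb{C}^{N_x}$, and $\hat g_0,\dots,\hat g_{N_\omega-1}\in\mathbb{C}^{N_x}$, and set $$g(t) = \frac{1}{N_\omega}\sum_{l=0}^{N_\omega-1}\hat g_l\, e^{i\omega_l t}.$$ Let $q:[0,T]\to\mathbb{C}^{N_x}$ be the solution of $\dot q = Aq + g(t)$, $q(0)=q_0$, i.e. $q(t) = e^{At}q_0 + \int_0^t e^{A(t-t')}g(t')\,dt'$. Assume that $i\omega_l I - A$ is invertible for every $l\in\{0,\dots,N_\omega-1\}$, and write $R_l = (i\omega_l I - A)^{-1}$. Fix $k\in\{0,\dots,N_\omega-1\}$ and assume that $I - e^{(A - i\omega_k I)\Delta t}$ is invertible. Then $$\hat q_k := \sum_{j=0}^{N_\omega-1} q(t_j)\,e^{-i\omega_k t_j} = R_k\hat g_k + \big(I - e^{(A - i\omega_k I)\Delta t}\big)^{-1}\big(I - e^{AT}\big)\Big(q_0 - \frac{1}{N_\omega}\sum_{l=0}^{N_\omega-1}R_l\hat g_l\Big).$$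
   Context: $I$ denotes the $N_x\times N_x$ identity matrix and $e^{M}$ the matrix exponential. Note that $\omega_k T\in 2\pi\mathbb{Z}$ for all $k$. The quantity $\hat q_k$ is the $k$-th component of the discrete Fourier transform (without normalization) of the samples $q(t_0),\dots,q(t_{N_\omega-1})$; with this convention $\hat g_l$ is the $l$-th DFT component of the samples of $g$. (In the paper this is applied with $g(t) = Bf(t) + n(q(t))$, the sum of an external forcing and a nonlinear term, both assumed to be exactly of this finite Fourier form.) *)

From HB Require Import structures.
From mathcomp Require Import all_boot all_order all_algebra.
From mathcomp Require Import complex.
From mathcomp Require Import all_classical all_reals all_analysis.
Set Implicit Arguments. Unset Strict Implicit. Unset Printing Implicit Defensive.
Import Order.TTheory GRing.Theory Num.Theory.
Import numFieldNormedType.Exports.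
Local Open Scope ring_scope.
Local Open Scope complex_scope.
Local Open Scope classical_set_scope.

Definition Heaviside {R : realType} (s : R) : R := if s < 0 then 0 else 1.

Definition omega {R : realType} (Nw : nat) (T : R) (k : nat) : R :=
  2 * pi * (k%:R - Nw%:R * Heaviside (k%:R - Nw%:R / 2)) / T.

Definition cexpi {R : realType} (th : R) : R[i] := cos th +i* sin th.

Definition expmx {R : realType} (n : nat) (M : 'M[R[i]]_n) : 'M[R[i]]_n :=
  let S (N : nat) : 'M[R[i]]_n := \sum_(k < N) ((k`!)%:R)^-1 *: M ^+ k in
  \matrix_(a, b)
    (lim ((fun N => complex.Re (S N a b)) @ \oo)
     +i* lim ((fun N => complex.Im (S N a b)) @ \oo)).

Definition has_cderiv {R : realType} (f : R -> R[i]) (t : R) (d : R[i]) : Prop :=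
  is_derive t 1 (fun s => complex.Re (f s)) (complex.Re d) /\
  is_derive t 1 (fun s => complex.Im (f s)) (complex.Im d).

Definition ccont_on {R : realType} (D : set R) (f : R -> R[i]) : Prop :=
  {within D, continuous (fun s => complex.Re (f s))} /\
  {within D, continuous (fun s => complex.Im (f s))}.

(* Subtract the forced response
     p t = N^-1 sum_l exp (i w_l t) (i w_l - A)^-1 ghat_l,
   a particular solution of q' = A q + g because (i w_l - A) (i w_l - A)^-1 = 1;
   the remainder solves u' = A u, so q t = p t + expmx (t A) (q 0 - p 0).
   The frequencies are w_l = 2 pi m_l / T with distinct integers m_l, |m_l - m_k| < N,
   so sampling at t_j = j dt and summing against exp (- i w_k t_j) keeps only
   the k-th mode of p.  For the free part, exp (- i w_k t_j) expmx (t_j A) = F ^+ j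
   with F = expmx (dt (A - i w_k)), and the geometric sum gives
   (1 - F)^-1 (1 - F ^+ N), where F ^+ N = expmx (T A) since w_k T is a multiple
   of 2 pi. *)

From HB Require Import structures.
From mathcomp Require Import all_boot all_order all_algebra.
From mathcomp Require Import complex.
From mathcomp Require Import all_classical all_reals all_analysis.
From mathcomp Require Import ring lra zify.
Import Order.TTheory GRing.Theory Num.Theory.
Import numFieldNormedType.Exports.
Local Open Scope ring_scope.
Local Open Scope complex_scope.
Local Open Scope classical_set_scope.

Local Notation cRe := (@complex.Re _).
Local Notation cIm := (@complex.Im _).

Section CalculusOfComplexFunctions.
Context {R : realType}.
Implicit Types (f g : R -> R[i]) (c d x y z : R[i]) (s t : R) (D : set R).

(* [cpart true] is the real part and [cpart false] the imaginary part, so that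
   statements about both parts are proved once. *)
Definition cpart (re : bool) z : R := if re then cRe z else cIm z.

Lemma cpart0 re : cpart re 0 = 0.
Proof. by case: re. Qed.

Lemma cpartD re x y : cpart re (x + y) = cpart re x + cpart re y.
Proof. by case: re; case: x y => [a b] [c d]. Qed.

Lemma cpartN re x : cpart re (- x) = - cpart re x.
Proof. by case: re; case: x => [a b]. Qed.

Lemma cpart_sum re n (F : 'I_n -> R[i]) :
  cpart re (\sum_(i < n) F i) = \sum_(i < n) cpart re (F i).
Proof. by elim/big_ind2: _ => [|x1 x2 y1 y2 <- <-|//]; rewrite ?cpart0 ?cpartD. Qed.

Lemma cpart_realM re (r : R) z : cpart re (r%:C * z) = r * cpart re z.
Proof. by case: re; case: z => [a b] /=; rewrite !mul0r ?subr0 ?addr0. Qed.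

Lemma cpartM re x y :
  cpart re (x * y) =
  cRe x * cpart re y + (if re then - cIm x else cIm x) * cpart (~~ re) y.
Proof. by case: re; case: x y => [a b] [c d] /=; rewrite ?mulNr. Qed.

Lemma eq_cpart x y : (forall re, cpart re x = cpart re y) -> x = y.
Proof. by case: x y => [a b] [c d] e; have := e true; have := e false => /= -> ->. Qed.

Lemma has_cderivP f t d :
  has_cderiv f t d <-> forall re, is_derive t 1 (cpart re \o f) (cpart re d).
Proof. by split=> [[] ? ? []|h] //; split; [exact: (h true)|exact: (h false)]. Qed.

Lemma ccont_onP D f :
  ccont_on D f <-> forall re, {within D, continuous (cpart re \o f)}.
Proof. by split=> [[] ? ? []|h] //; split; [exact: (h true)|exact: (h false)]. Qed.

Lemma has_cderiv_cst c t : has_cderiv (fun=> c) t 0.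
Proof. by apply/has_cderivP => re; rewrite cpart0; exact: is_derive_cst. Qed.

Lemma has_cderivD {f g t df dg} :
  has_cderiv f t df -> has_cderiv g t dg ->
  has_cderiv (fun s => f s + g s) t (df + dg).
Proof.
move=> /has_cderivP hf /has_cderivP hg; apply/has_cderivP => re.
have -> : cpart re \o (fun s => f s + g s) = (cpart re \o f) + (cpart re \o g).
  by apply/funext => s /=; rewrite cpartD.
by rewrite cpartD; exact: is_deriveD.
Qed.

Lemma has_cderivN {f t df} :
  has_cderiv f t df -> has_cderiv (fun s => - f s) t (- df).
Proof.
move=> /has_cderivP hf; apply/has_cderivP => re.
have -> : cpart re \o (fun s => - f s) = - (cpart re \o f).
  by apply/funext => s /=; rewrite cpartN.
by rewrite cpartN; exact: is_deriveN.
Qed.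

Lemma has_cderiv_sum {n} {f : 'I_n -> R -> R[i]} {t} {df : 'I_n -> R[i]} :
  (forall i, has_cderiv (f i) t (df i)) ->
  has_cderiv (fun s => \sum_(i < n) f i s) t (\sum_(i < n) df i).
Proof.
elim: n f df => [|n IH] f df H.
  under eq_fun do rewrite big_ord0; rewrite big_ord0; exact: has_cderiv_cst.
under eq_fun do rewrite big_ord_recr; rewrite big_ord_recr.
by apply: has_cderivD => //; apply: IH => i; exact: H.
Qed.

Lemma has_cderivM {f g t df dg} :
  has_cderiv f t df -> has_cderiv g t dg ->
  has_cderiv (fun s => f s * g s) t (df * g t + f t * dg).
Proof.
move=> [f1 f2] [g1 g2]; split.
- have -> : (fun s => cRe (f s * g s)) =
      (fun s => cRe (f s)) * (fun s => cRe (g s)) -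
      (fun s => cIm (f s)) * (fun s => cIm (g s)).
    by apply/funext => s; rewrite !fctE; case: (f s) (g s) => [? ?] [? ?].
  apply: is_derive_eq (is_deriveB (is_deriveM f1 g1) (is_deriveM f2 g2)) _.
  clear f1 f2 g1 g2; rewrite /=.
  by case: df dg (f t) (g t) => [? ?] [? ?] [? ?] [? ?] /=;
    rewrite -![_ *: _]/(_ * _); ring.
- have -> : (fun s => cIm (f s * g s)) =
      (fun s => cRe (f s)) * (fun s => cIm (g s)) +
      (fun s => cIm (f s)) * (fun s => cRe (g s)).
    by apply/funext => s; rewrite !fctE; case: (f s) (g s) => [? ?] [? ?].
  apply: is_derive_eq (is_deriveD (is_deriveM f1 g2) (is_deriveM f2 g1)) _.
  clear f1 f2 g1 g2; rewrite /=.
  by case: df dg (f t) (g t) => [? ?] [? ?] [? ?] [? ?] /=;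
    rewrite -![_ *: _]/(_ * _); ring.
Qed.

Lemma has_cderiv_cexpi (w s : R) :
  has_cderiv (fun s => cexpi (w * s)) s ((0 +i* w) * cexpi (w * s)).
Proof.
have dw : is_derive s 1 ( *%R w) w.
  by rewrite -[X in is_derive _ _ _ X]mulr1; exact: is_deriveZ.
split.
- by apply: is_derive_eq (is_derive1_comp (is_derive_cos (w * s)) dw) _ => /=; ring.
- by apply: is_derive_eq (is_derive1_comp (is_derive_sin (w * s)) dw) _ => /=; ring.
Qed.

Lemma has_cderiv_ccont {D f} {df : R -> R[i]} :
  (forall s, has_cderiv f s (df s)) -> ccont_on D f.
Proof.
move=> H; apply/ccont_onP => re; apply: continuous_subspaceT => s.
have /has_cderivP /(_ re) [d _] := H s.
exact/differentiable_continuous/derivable1_diffP.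
Qed.

Lemma ccont_cst D c : ccont_on D (fun=> c).
Proof. by split; apply: continuous_subspaceT; exact: cst_continuous. Qed.

Lemma ccontD {D f g} :
  ccont_on D f -> ccont_on D g -> ccont_on D (fun s => f s + g s).
Proof.
move=> /ccont_onP hf /ccont_onP hg; apply/ccont_onP => re.
have -> : cpart re \o (fun s => f s + g s) = (cpart re \o f) + (cpart re \o g).
  by apply/funext => s /=; rewrite cpartD.
by move=> x; exact: continuousD (hf re x) (hg re x).
Qed.

Lemma ccontN {D f} : ccont_on D f -> ccont_on D (fun s => - f s).
Proof.
move=> /ccont_onP hf; apply/ccont_onP => re.
have -> : cpart re \o (fun s => - f s) = - (cpart re \o f).
  by apply/funext => s /=; rewrite cpartN.
by move=> x; exact: continuousN (hf re x).
Qed.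

Lemma ccontM {D f g} :
  ccont_on D f -> ccont_on D g -> ccont_on D (fun s => f s * g s).
Proof.
move=> [f1 f2] [g1 g2]; split => x.
- have -> : (fun s => cRe (f s * g s)) =
      (fun s => cRe (f s)) * (fun s => cRe (g s)) -
      (fun s => cIm (f s)) * (fun s => cIm (g s)).
    by apply/funext => s; rewrite !fctE; case: (f s) (g s) => [? ?] [? ?].
  exact: continuousB (continuousM (f1 x) (g1 x)) (continuousM (f2 x) (g2 x)).
- have -> : (fun s => cIm (f s * g s)) =
      (fun s => cRe (f s)) * (fun s => cIm (g s)) +
      (fun s => cIm (f s)) * (fun s => cRe (g s)).
    by apply/funext => s; rewrite !fctE; case: (f s) (g s) => [? ?] [? ?].
  exact: continuousD (continuousM (f1 x) (g2 x)) (continuousM (f2 x) (g1 x)).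
Qed.

Lemma ccont_sum {D n} {f : 'I_n -> R -> R[i]} :
  (forall i, ccont_on D (f i)) -> ccont_on D (fun s => \sum_(i < n) f i s).
Proof.
elim: n f => [|n IH] f H.
  under eq_fun do rewrite big_ord0; exact: ccont_cst.
under eq_fun do rewrite big_ord_recr.
by apply: ccontD => //; apply: IH => i; exact: H.
Qed.

Lemma ccont_onW {D E f} : E `<=` D -> ccont_on D f -> ccont_on E f.
Proof. by move=> ED [? ?]; split; exact: continuous_subspaceW ED _. Qed.

End CalculusOfComplexFunctions.

Section CalculusOfMatrixFunctions.
Context {R : realType} {m n : nat}.
Implicit Types (F G : R -> 'M[R[i]]_(m, n)) (DF DG : 'M[R[i]]_(m, n)) (s t : R)
  (D : set R).

Definition has_mxderiv F t DF := forall a b, has_cderiv (fun s => F s a b) t (DF a b).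

Definition mxcont_on D F := forall a b, ccont_on D (fun s => F s a b).

Lemma has_mxderiv_eq {F t DF} DG : has_mxderiv F t DF -> DF = DG -> has_mxderiv F t DG.
Proof. by move=> ? <-. Qed.

Lemma has_mxderiv_cst (M : 'M[R[i]]_(m, n)) t : has_mxderiv (fun=> M) t 0.
Proof. by move=> a b; rewrite mxE; exact: has_cderiv_cst. Qed.

Lemma has_mxderivD {F G t DF DG} :
  has_mxderiv F t DF -> has_mxderiv G t DG ->
  has_mxderiv (fun s => F s + G s) t (DF + DG).
Proof.
move=> hF hG a b; under eq_fun do rewrite mxE.
by rewrite mxE; exact: has_cderivD.
Qed.

Lemma has_mxderivN {F t DF} :
  has_mxderiv F t DF -> has_mxderiv (fun s => - F s) t (- DF).
Proof.
move=> hF a b; under eq_fun do rewrite mxE.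
by rewrite mxE; exact: has_cderivN.
Qed.

Lemma has_mxderiv_sum {k} {F : 'I_k -> R -> 'M[R[i]]_(m, n)} {t}
    {DF : 'I_k -> 'M[R[i]]_(m, n)} :
  (forall i, has_mxderiv (F i) t (DF i)) ->
  has_mxderiv (fun s => \sum_(i < k) F i s) t (\sum_(i < k) DF i).
Proof.
move=> H a b; under eq_fun do rewrite summxE.
by rewrite summxE; apply: has_cderiv_sum => i; exact: H.
Qed.

Lemma has_mxderivZ {c : R -> R[i]} {F t dc DF} :
  has_cderiv c t dc -> has_mxderiv F t DF ->
  has_mxderiv (fun s => c s *: F s) t (dc *: F t + c t *: DF).
Proof.
move=> hc hF a b; under eq_fun do rewrite mxE.
by rewrite !mxE; exact: has_cderivM.
Qed.

Lemma has_mxderiv_cont {D F} {DF : R -> 'M[R[i]]_(m, n)} :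
  (forall s, has_mxderiv F s (DF s)) -> mxcont_on D F.
Proof. by move=> H a b; apply: has_cderiv_ccont => s; exact: H. Qed.

Lemma mxcont_onD {D F G} :
  mxcont_on D F -> mxcont_on D G -> mxcont_on D (fun s => F s + G s).
Proof. by move=> hF hG a b; under eq_fun do rewrite mxE; exact: ccontD. Qed.

Lemma mxcont_onN {D F} : mxcont_on D F -> mxcont_on D (fun s => - F s).
Proof. by move=> hF a b; under eq_fun do rewrite mxE; exact: ccontN. Qed.

Lemma mxcont_onW {D E F} : E `<=` D -> mxcont_on D F -> mxcont_on E F.
Proof. by move=> ED hF a b; exact: ccont_onW ED (hF a b). Qed.

Lemma mxderiv0_const {F} {a b : R} :
  a <= b -> (forall s, a < s < b -> has_mxderiv F s 0) -> mxcont_on `[a, b] F ->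
  F b = F a.
Proof.
move=> ab F'0 cF; apply/matrixP => i j; apply: eq_cpart => re.
case: (@MVT_segment R (cpart re \o (fun s => F s i j)) (fun=> 0) a b ab).
- move=> x; rewrite in_itv /= => /F'0 /(_ i j) /has_cderivP /(_ re).
  by rewrite mxE cpart0.
- by have /ccont_onP := cF i j; apply.
by move=> c _; rewrite mul0r => /eqP; rewrite subr_eq0 => /eqP.
Qed.

End CalculusOfMatrixFunctions.

Lemma has_mxderivM {R : realType} {m n p : nat} {F : R -> 'M[R[i]]_(m, n)}
    {G : R -> 'M[R[i]]_(n, p)} {t DF DG} :
  has_mxderiv F t DF -> has_mxderiv G t DG ->
  has_mxderiv (fun s => F s *m G s) t (DF *m G t + F t *m DG).
Proof.
move=> hF hG a b; under eq_fun do rewrite mxE.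
rewrite !mxE -big_split; apply: has_cderiv_sum => c.
exact: has_cderivM.
Qed.

Lemma mxcont_onM {R : realType} {m n p : nat} {D : set R} {F : R -> 'M[R[i]]_(m, n)}
    {G : R -> 'M[R[i]]_(n, p)} :
  mxcont_on D F -> mxcont_on D G -> mxcont_on D (fun s => F s *m G s).
Proof.
move=> hF hG a b; under eq_fun do rewrite mxE.
by apply: ccont_sum => c; exact: ccontM.
Qed.

Section MatrixExponential.
Context {R : realType} {n : nat}.
Implicit Types (X M : 'M[R[i]]_n) (r s : R) (x y z : R[i]).

Definition cnorm1 (z : R[i]) : R := `|cRe z| + `|cIm z|.

Lemma cnorm1_ge0 z : 0 <= cnorm1 z.
Proof. by rewrite addr_ge0. Qed.

Lemma norm_cpart_le re z : `|cpart re z| <= cnorm1 z.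
Proof. by case: re; rewrite /cnorm1 /= ?lerDl ?lerDr. Qed.

Lemma cnorm1M x y : cnorm1 (x * y) <= cnorm1 x * cnorm1 y.
Proof.
case: x y => [a b] [c d]; rewrite /cnorm1 /=.
have := ler_normB (a * c) (b * d); have := ler_normD (a * d) (b * c).
rewrite !normrM; nra.
Qed.

Lemma cnorm1D x y : cnorm1 (x + y) <= cnorm1 x + cnorm1 y.
Proof.
case: x y => [a b] [c d]; rewrite /cnorm1 /=.
by have := ler_normD a c; have := ler_normD b d; lra.
Qed.

Lemma cnorm1_sum k (F : 'I_k -> R[i]) :
  cnorm1 (\sum_(i < k) F i) <= \sum_(i < k) cnorm1 (F i).
Proof.
elim/big_ind2: _ => [|x1 x2 y1 y2 h1 h2|//]; first by rewrite /cnorm1 normr0 addr0.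
exact: le_trans (cnorm1D _ _) (lerD h1 h2).
Qed.

Definition mxnorm1 X : R := \sum_(a < n) \sum_(b < n) cnorm1 (X a b).

Lemma mxnorm1_ge0 X : 0 <= mxnorm1 X.
Proof. by apply: sumr_ge0 => a _; apply: sumr_ge0 => b _; exact: cnorm1_ge0. Qed.

Lemma cnorm1_exprmx_le X k a b : cnorm1 ((X ^+ k) a b) <= mxnorm1 X ^+ k.
Proof.
elim: k a b => [|k IH] a b.
  by rewrite !mxE; case: (a == b); rewrite /cnorm1 /= ?normr1 normr0 addr0.
rewrite exprS -mulmxE mxE; apply: le_trans (cnorm1_sum _ _) _.
apply: (@le_trans _ _ (\sum_(c < n) cnorm1 (X a c) * mxnorm1 X ^+ k)).
  apply: ler_sum => c _; apply: le_trans (cnorm1M _ _) _.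
  by apply: ler_wpM2l; [exact: cnorm1_ge0 | exact: IH].
rewrite -mulr_suml exprS ler_wpM2r ?exprn_ge0 ?mxnorm1_ge0 //.
rewrite /mxnorm1 [leRHS](bigD1 a) //= lerDl.
by apply: sumr_ge0 => i _; apply: sumr_ge0 => j _; exact: cnorm1_ge0.
Qed.

Definition expmx_partial M N : 'M[R[i]]_n := \sum_(k < N) ((k`!)%:R)^-1 *: M ^+ k.

Lemma cpart_expmx_lim M a b re :
  cpart re (expmx M a b) = lim (cpart re (expmx_partial M N a b) @[N --> \oo]).
Proof. by rewrite /expmx mxE; case: re. Qed.

(* The [re]-part of the entry [(a, b)] of [X ^+ p *m expmx (r *: X)] is the real
   power series in [r] with these coefficients. *)
Definition expmx_coef X a b re p : R^nat :=
  fun k => cpart re ((X ^+ (k + p)) a b) / (k`!)%:R.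

Lemma expmx_coef_diffs X a b re p :
  pseries_diffs (expmx_coef X a b re p) = expmx_coef X a b re p.+1.
Proof.
apply/funext => k; rewrite /pseries_diffs /expmx_coef addSnnS factS natrM.
have k1 : (k.+1%:R : R) != 0 by rewrite pnatr_eq0.
have kf : ((k`!)%:R : R) != 0 by rewrite pnatr_eq0 -lt0n fact_gt0.
by field; rewrite kf /= addrC natr1.
Qed.

Lemma expmx_coef_cvg X a b re p (K : R) : cvgn (pseries (expmx_coef X a b re p) K).
Proof.
pose nX := mxnorm1 X; have nX0 : 0 <= nX := mxnorm1_ge0 X.
apply: normed_cvg.
apply: (@series_le_cvg R _ (nX ^+ p *: exp_coeff (nX * `|K|))).
- by move=> k /=.
- by move=> k; apply: mulr_ge0; rewrite ?exprn_ge0 ?exp_coeff_ge0 ?mulr_ge0.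
- move=> k; rewrite /= /expmx_coef /exp_coeff /= normrM normrX normrM normfV normr_nat.
  apply: (@le_trans _ _ (nX ^+ (k + p) / (k`!)%:R * `|K| ^+ k)).
    rewrite ler_wpM2r ?exprn_ge0 // ler_wpM2r ?invr_ge0 //.
    exact: le_trans (norm_cpart_le _ _) (cnorm1_exprmx_le _ _ _ _).
  change (nX ^+ (k + p) / k`!%:R * `|K| ^+ k <=
    nX ^+ p * ((nX * `|K|) ^+ k / k`!%:R)).
  by rewrite exprD exprMn le_eqVlt; apply/orP; left; apply/eqP; ring.
- exact: is_cvg_seriesZ (is_cvg_series_exp_coeff _).
Qed.

Lemma cpart_pseries X a b re p r N (F : nat -> 'M[R[i]]_n) :
  (forall k, F k = ((k`!)%:R)^-1 *: (r%:C ^+ k *: X ^+ (k + p))) ->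
  cpart re ((\sum_(k < N) F k) a b) = pseries (expmx_coef X a b re p) r N.
Proof.
move=> FE; rewrite /pseries /series /= big_mkord summxE cpart_sum.
apply: eq_bigr => k _; rewrite FE !mxE.
have -> : ((k`!)%:R)^-1 = ((k`!)%:R^-1 : R)%:C :> R[i] by rewrite fmorphV rmorph_nat.
by rewrite -rmorphXn mulrA -rmorphM cpart_realM /expmx_coef; ring.
Qed.

Lemma exprmxZ (c : R[i]) M k : (c *: M) ^+ k = c ^+ k *: M ^+ k.
Proof.
elim: k => [|k IH]; first by rewrite !expr0 scale1r.
by rewrite !exprS -!mulmxE IH -scalemxAl -scalemxAr scalerA.
Qed.

Lemma cpart_expmx_partial X a b re r N :
  cpart re (expmx_partial (r%:C *: X) N a b) = pseries (expmx_coef X a b re 0) r N.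
Proof.
apply: (cpart_pseries _ _ _ _ _ _ _ (fun k => (k`!%:R)^-1 *: (r%:C *: X) ^+ k)) => k.
by rewrite exprmxZ addn0.
Qed.

Lemma cpart_mulmx_expmx_partial X a b re r N :
  cpart re ((X *m expmx_partial (r%:C *: X) N) a b) =
  pseries (expmx_coef X a b re 1) r N.
Proof.
rewrite /expmx_partial mulmx_sumr.
apply: (cpart_pseries _ _ _ _ _ _ _
  (fun k => X *m ((k`!%:R)^-1 *: (r%:C *: X) ^+ k))) => k.
by rewrite exprmxZ -!scalemxAr addn1 exprS mulmxE.
Qed.

Lemma mulmx_expmx_partialC X r N :
  X *m expmx_partial (r%:C *: X) N = expmx_partial (r%:C *: X) N *m X.
Proof.
rewrite /expmx_partial mulmx_sumr mulmx_suml; apply: eq_bigr => k _.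
by rewrite -scalemxAr -scalemxAl exprmxZ -scalemxAr -scalemxAl !mulmxE -exprS exprSr.
Qed.

End MatrixExponential.

Lemma cvg_sum_ord {R : realType} {T : Type} (F : set_system T) {FF : Filter F} k
    (f : 'I_k -> T -> R) (l : 'I_k -> R) :
  (forall i, f i @ F --> l i) -> (fun x => \sum_(i < k) f i x) @ F --> \sum_(i < k) l i.
Proof.
elim: k f l => [|k IH] f l H.
  by under eq_fun do rewrite big_ord0; rewrite big_ord0; exact: cvg_cst.
under eq_fun do rewrite big_ord_recr; rewrite big_ord_recr.
by apply: cvgD; [apply: IH => i |]; exact: H.
Qed.

Section EntrywiseConvergence.
Context {R : realType}.

Definition mx_cvg {m p} (U : nat -> 'M[R[i]]_(m, p)) (L : 'M[R[i]]_(m, p)) :=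
  forall a b re, cpart re (U N a b) @[N --> \oo] --> cpart re (L a b).

Lemma mx_cvg_unique {m p} (U : nat -> 'M[R[i]]_(m, p)) L L' :
  mx_cvg U L -> mx_cvg U L' -> L = L'.
Proof.
move=> UL UL'; apply/matrixP => a b; apply: eq_cpart => re.
by rewrite -(cvg_lim _ (UL a b re)) // -(cvg_lim _ (UL' a b re)).
Qed.

Lemma cvg_cpart_sumM k (x : 'I_k -> R[i]) (u : 'I_k -> nat -> R[i]) l :
  (forall c re, cpart re (u c N) @[N --> \oo] --> cpart re (l c)) ->
  forall re, cpart re (\sum_(c < k) x c * u c N) @[N --> \oo] -->
             cpart re (\sum_(c < k) x c * l c).
Proof.
move=> ul re; under eq_fun do rewrite cpart_sum; rewrite cpart_sum.
apply: cvg_sum_ord => c; under eq_fun do rewrite cpartM; rewrite cpartM.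
by apply: cvgD; apply: cvgM; [exact: cvg_cst|exact: ul|exact: cvg_cst|exact: ul].
Qed.

Lemma mx_cvg_mull {m k p} (M : 'M[R[i]]_(m, k)) (U : nat -> 'M[R[i]]_(k, p)) L :
  mx_cvg U L -> mx_cvg (fun N => M *m U N) (M *m L).
Proof.
move=> UL a b re; under eq_fun do rewrite mxE; rewrite mxE.
by apply: cvg_cpart_sumM => c; exact: UL.
Qed.

Lemma mx_cvg_mulr {m k p} (M : 'M[R[i]]_(k, p)) (U : nat -> 'M[R[i]]_(m, k)) L :
  mx_cvg U L -> mx_cvg (fun N => U N *m M) (L *m M).
Proof.
move=> UL a b re.
have E (V : 'M[R[i]]_(m, k)) : (V *m M) a b = \sum_(c < k) M c b * V a c.
  by rewrite mxE; apply: eq_bigr => c _; rewrite mulrC.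
under eq_fun do rewrite E; rewrite E.
by apply: cvg_cpart_sumM => c; exact: UL.
Qed.

End EntrywiseConvergence.

Section MatrixExponentialCalculus.
Context {R : realType} {n : nat}.
Implicit Types (X : 'M[R[i]]_n) (r s : R).

Lemma expmx_partial_cvg X r :
  mx_cvg (expmx_partial (r%:C *: X)) (expmx (r%:C *: X)).
Proof.
move=> a b re.
have E : (fun N => cpart re (expmx_partial (r%:C *: X) N a b)) =
         pseries (expmx_coef X a b re 0) r.
  by apply/funext => N; exact: cpart_expmx_partial.
by rewrite cpart_expmx_lim E; exact: expmx_coef_cvg.
Qed.

Lemma cpart_expmx X a b re r :
  cpart re (expmx (r%:C *: X) a b) = limn (pseries (expmx_coef X a b re 0) r).
Proof.
apply/esym/cvg_lim => //; rewrite -(funext (cpart_expmx_partial X a b re r)).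
exact: expmx_partial_cvg.
Qed.

Lemma cpart_mulmx_expmx X a b re r :
  cpart re ((X *m expmx (r%:C *: X)) a b) = limn (pseries (expmx_coef X a b re 1) r).
Proof.
apply/esym/cvg_lim => //; rewrite -(funext (cpart_mulmx_expmx_partial X a b re r)).
by apply: mx_cvg_mull; exact: expmx_partial_cvg.
Qed.

Lemma mulmx_expmxC X r : X *m expmx (r%:C *: X) = expmx (r%:C *: X) *m X.
Proof.
apply: (@mx_cvg_unique _ _ _ (fun N => X *m expmx_partial (r%:C *: X) N)).
  by apply: mx_cvg_mull; exact: expmx_partial_cvg.
under eq_fun do rewrite mulmx_expmx_partialC.
by apply: mx_cvg_mulr; exact: expmx_partial_cvg.
Qed.

(* Term-by-term differentiation of the power series of each entry. *)
Lemma has_mxderiv_expmx X (a0 s : R) :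
  has_mxderiv (fun s => expmx ((s - a0)%:C *: X)) s (X *m expmx ((s - a0)%:C *: X)).
Proof.
move=> a b; apply/has_cderivP => re.
pose c := expmx_coef X a b re 0; pose K := `|s - a0| + 1.
have cK : cvgn (pseries c K) by exact: expmx_coef_cvg.
have c'K : cvgn (pseries (pseries_diffs c) K).
  by rewrite expmx_coef_diffs; exact: expmx_coef_cvg.
have c''K : cvgn (pseries (pseries_diffs (pseries_diffs c)) K).
  by rewrite !expmx_coef_diffs; exact: expmx_coef_cvg.
have sK : `|s - a0| < `|K| by rewrite [ltRHS]ger0_norm ?addr_ge0 // ltrDl.
have := pseries_snd_diffs cK c'K c''K sK; rewrite expmx_coef_diffs => dc.
have dshift : is_derive s 1 (fun s => s - a0) 1.
  exact: is_derive_eq (is_derive_shift s 1 (- a0)) _.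
rewrite cpart_mulmx_expmx.
have -> : cpart re \o (fun s => expmx ((s - a0)%:C *: X) a b) =
          (fun x => limn (pseries c x)) \o (fun s => s - a0).
  by apply/funext => x /=; rewrite cpart_expmx.
by apply: is_derive_eq (@is_derive1_comp _ _ (fun s => s - a0) s _ _ dc dshift) _;
  rewrite mulr1.
Qed.

Lemma expmx0 X : expmx ((0 : R)%:C *: X) = 1.
Proof.
apply: (mx_cvg_unique _ _ _ (expmx_partial_cvg X 0)) => a b re.
apply: cvg_near_cst; exists 1%N => // -[|N] //= _.
rewrite /expmx_partial big_ord_recl big1 ?addr0 => [|i _].
  by rewrite fact0 invr1 scale1r expr0.
by rewrite exprmxZ (_ : (0 : R)%:C = 0) // expr0n /= scale0r scaler0.
Qed.

Lemma comm_mulmxD {m} (X Y E : 'M[R[i]]_n) (F : 'M[R[i]]_(n, m)) :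
  X *m E = E *m X -> X *m E *m F + E *m (Y *m F) = E *m ((X + Y) *m F).
Proof. by move=> XE; rewrite XE -mulmxA -mulmxDr mulmxDl. Qed.

Lemma expmx_mulN X r : 0 <= r -> expmx (r%:C *: X) *m expmx (r%:C *: - X) = 1.
Proof.
move=> r0; pose W s := expmx ((s - 0)%:C *: X) *m expmx ((s - 0)%:C *: - X).
have W'0 s : has_mxderiv W s 0.
  apply: has_mxderiv_eq
    (has_mxderivM (has_mxderiv_expmx X 0 s) (has_mxderiv_expmx (- X) 0 s)) _.
  rewrite comm_mulmxD; last exact: mulmx_expmxC.
  by rewrite addrN mul0mx mulmx0.
have := mxderiv0_const r0 (fun s _ => W'0 s) (has_mxderiv_cont W'0).
by rewrite /W !subr0 !expmx0 mulmx1.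
Qed.

(* Uniqueness for [Y' = X Y]: [expmx (- (s - a0) X) Y s] has zero derivative. *)
Lemma linear_ode_solution {m} {X : 'M[R[i]]_n} {Y : R -> 'M[R[i]]_(n, m)} {a0 b0 s} :
  a0 <= s -> s <= b0 ->
  (forall t, a0 < t < b0 -> has_mxderiv Y t (X *m Y t)) -> mxcont_on `[a0, b0] Y ->
  Y s = expmx ((s - a0)%:C *: X) *m Y a0.
Proof.
move=> a0s sb0 Y' cY.
pose Z t := expmx ((t - a0)%:C *: - X) *m Y t.
have Z'0 t : a0 < t < s -> has_mxderiv Z t 0.
  move=> /andP[a0t ts].
  have t_ab : a0 < t < b0 by rewrite a0t (lt_le_trans ts sb0).
  apply: has_mxderiv_eq (has_mxderivM (has_mxderiv_expmx (- X) a0 t) (Y' t t_ab)) _.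
  rewrite comm_mulmxD; last exact: mulmx_expmxC.
  by rewrite addNr mul0mx mulmx0.
have cZ : mxcont_on `[a0, s] Z.
  apply: mxcont_onM; first exact: has_mxderiv_cont (has_mxderiv_expmx (- X) a0).
  by apply: mxcont_onW cY; apply: subset_itv; rewrite bnd_simp.
have := mxderiv0_const a0s Z'0 cZ; rewrite /Z subrr expmx0 mul1mx => <-.
by rewrite mulmxA expmx_mulN ?mul1mx // subr_ge0.
Qed.

End MatrixExponentialCalculus.

Section DiscreteExponentials.
Context {R : realType}.
Implicit Types (x y : R).

Lemma cexpi0 : cexpi (0 : R) = 1.
Proof. by rewrite /cexpi cos0 sin0. Qed.

Lemma cexpiD x y : cexpi (x + y) = cexpi x * cexpi y.
Proof. by rewrite /cexpi /= cosD sinD; simpc; rewrite (addrC (sin x * _)). Qed.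

Lemma cexpiM_natl x j : cexpi (j%:R * x) = cexpi x ^+ j.
Proof.
elim: j => [|j IH]; first by rewrite mul0r cexpi0.
rewrite exprS -IH -cexpiD; congr cexpi.
by rewrite -natr1 mulrDl mul1r addrC.
Qed.

Lemma cexpi_neq0 x : cexpi x != 0.
Proof.
apply/eqP; rewrite /cexpi => -[c0 s0]; have := cos2Dsin2 x.
by rewrite c0 s0 expr0n add0r => /eqP; rewrite eq_sym oner_eq0.
Qed.

Lemma cexpiN x : cexpi (- x) = (cexpi x)^-1.
Proof.
apply: (mulIf (cexpi_neq0 x)).
by rewrite -cexpiD addNr cexpi0 mulVf // cexpi_neq0.
Qed.

Lemma cexpi_2pi_int (z : int) : cexpi (2 * pi * z%:~R : R) = 1.
Proof.
have cexpi_2pi_nat (k : nat) : cexpi (2 * pi * k%:R : R) = 1.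
  have -> : 2 * pi * k%:R = 0 + pi *+ 2 *+ k :> R.
    by rewrite add0r -mulrnA -[in RHS]mulr_natr natrM; ring.
  by rewrite /cexpi (periodicn (@cosD2pi R)) (periodicn (@sinD2pi R)) cos0 sin0.
case: z => k; first exact: cexpi_2pi_nat.
by rewrite NegzE intrN mulrN cexpiN cexpi_2pi_nat invr1.
Qed.

(* [cos x = 1] forces [sin (x / 2) = 0], impossible for [0 < |x / 2| < pi]. *)
Lemma cexpi_neq1 x : 0 < `|x| < pi *+ 2 -> cexpi x != 1.
Proof.
move=> /andP[x_gt0 x_lt2pi]; apply/eqP; rewrite /cexpi => -[c1 _].
have := cosD (x / 2) (x / 2); rewrite -splitr c1.
have := cos2Dsin2 (x / 2); rewrite !expr2 => ? ?.
have /eqP : sin (x / 2) * sin (x / 2) = 0 by lra.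
rewrite mulf_eq0 orbb => /eqP sin0; have pi_gt0 := pi_gt0 R.
have [x_gt0'|x_lt0|x0] := ltgtP 0 x.
- suff : 0 < sin (x / 2) by lra.
  by apply: sin_gt0_pi; rewrite gtr0_norm // in x_lt2pi; apply/andP; split; lra.
- suff : 0 < sin (- (x / 2)) by rewrite sinN; lra.
  by apply: sin_gt0_pi; rewrite ltr0_norm // in x_lt2pi; apply/andP; split; lra.
- by move: x_gt0; rewrite -x0 normr0 ltxx.
Qed.

Lemma sum_root_unity_eq0 (z : R[i]) N : z != 1 -> z ^+ N = 1 ->
  \sum_(j < N) z ^+ j = 0.
Proof.
move=> z1 zN1; have := subrX1 z N; rewrite zN1 subrr => /esym/eqP.
by rewrite mulf_eq0 subr_eq0 (negbTE z1) => /eqP.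
Qed.

(* [l] folded into [[- N / 2, N / 2)]: the integer frequency behind [omega]. *)
Definition signed_index (N l : nat) : int :=
  if (2 * l < N)%N then l%:Z else l%:Z - N%:Z.

Lemma omegaE N (T : R) l : omega N T l = 2 * pi * (signed_index N l)%:~R / T.
Proof.
have E : (l%:R - N%:R / 2 < 0 :> R) = (2 * l < N)%N.
  by rewrite subr_lt0 ltr_pdivlMr // -natrM ltr_nat mulnC.
rewrite /omega /Heaviside /signed_index E.
by case: ifP => _; rewrite ?mulr0 ?subr0 ?mulr1 ?intrB.
Qed.

Lemma signed_index_sub {N l k} : (l < N)%N -> (k < N)%N -> l != k ->
  signed_index N l != signed_index N k /\
  - N%:Z < signed_index N l - signed_index N k < N%:Z.
Proof.
move=> lN kN /eqP lk; rewrite /signed_index.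
by case: ifP => ?; case: ifP => ? /=; (split; [apply/eqP | apply/andP; split]); lia.
Qed.

Lemma omega_period N (T : R) k : T != 0 -> cexpi (- (omega N T k * T)) = 1.
Proof.
move=> T0; rewrite omegaE divfK //.
by rewrite -mulrN -intrN cexpi_2pi_int.
Qed.

Lemma sum_cexpi_omega N (dt : R) l k : (l < N)%N -> (k < N)%N -> 0 < dt ->
  \sum_(j < N) cexpi (- (omega N (N%:R * dt) k * (j%:R * dt))) *
               cexpi (omega N (N%:R * dt) l * (j%:R * dt)) =
  if l == k then N%:R else 0.
Proof.
move=> lN kN dt0; have N0 : (0 < N)%N by exact: leq_ltn_trans lN.
have N0R : (N%:R : R) != 0 by rewrite pnatr_eq0 -lt0n.
pose d := signed_index N l - signed_index N k.
pose x : R := 2 * pi * d%:~R / N%:R.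
have termE (j : 'I_N) : cexpi (- (omega N (N%:R * dt) k * (j%:R * dt))) *
    cexpi (omega N (N%:R * dt) l * (j%:R * dt)) = cexpi x ^+ j.
  rewrite -cexpiD -cexpiM_natl !omegaE /x intrB; congr cexpi.
  by field; rewrite N0R gt_eqF.
rewrite (eq_bigr _ (fun j _ => termE j)).
case: eqP => [lk|/eqP lk].
  rewrite /x /d lk subrr mulr0 mul0r cexpi0.
  by under eq_bigr do rewrite expr1n; rewrite sumr_const card_ord.
have [d0 d_bd] := signed_index_sub lN kN lk.
apply: sum_root_unity_eq0; last first.
  by rewrite -cexpiM_natl /x mulrC mulfVK // cexpi_2pi_int.
have d_pos : 0 < `|d|%:~R :> R by rewrite ltr0z normr_gt0 subr_eq0.
have d_ltN : `|d|%:~R < N%:R :> R by rewrite pmulrn ltr_int; lia.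
have normx : `|x| = 2 * pi * (`|d|%:~R / N%:R).
  rewrite /x !normrM normfV !normr_nat (gtr0_norm (pi_gt0 R)) intr_norm.
  by rewrite !mulrA.
have dN_lt1 : `|d|%:~R / N%:R < 1 :> R by rewrite ltr_pdivrMr ?ltr0n // mul1r.
apply: cexpi_neq1; rewrite normx -(mulr_natl pi 2); have := pi_gt0 R.
have : 0 < `|d|%:~R / N%:R :> R by apply: divr_gt0 => //; rewrite ltr0n.
by move=> *; apply/andP; split; nra.
Qed.

End DiscreteExponentials.

Section ForcedLinearSystem.
Context {R : realType} {n : nat}.
Implicit Types (A : 'M[R[i]]_n) (w : nat -> R) (s dt : R).

Definition trigpoly {p} w N (v : nat -> 'M[R[i]]_(n, p)) s : 'M[R[i]]_(n, p) :=
  (N%:R)^-1 *: \sum_(l < N) cexpi (w l * s) *: v l.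

Lemma resolventE A (z : R[i]) (v : 'cV[R[i]]_n) : z%:M - A \in unitmx ->
  z *: (invmx (z%:M - A) *m v) = A *m (invmx (z%:M - A) *m v) + v.
Proof.
move=> zA; rewrite -[X in _ = _ + X]mul1mx -(mulmxV zA) -mulmxA.
by rewrite mulmxBl mul_scalar_mx subrKC.
Qed.

Lemma has_mxderiv_trigpoly_resolvent A w N (v : nat -> 'cV[R[i]]_n) s :
  (forall l : 'I_N, (0 +i* w l)%:M - A \in unitmx) ->
  has_mxderiv (trigpoly w N (fun l => invmx ((0 +i* w l)%:M - A) *m v l)) s
    (A *m trigpoly w N (fun l => invmx ((0 +i* w l)%:M - A) *m v l) s +
     trigpoly w N v s).
Proof.
move=> unitA.
apply: has_mxderiv_eq (has_mxderivZ (has_cderiv_cst _ s) (has_mxderiv_sum (fun l =>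
  has_mxderivZ (has_cderiv_cexpi (w l) s) (has_mxderiv_cst _ s)))) _.
rewrite scale0r add0r /trigpoly -scalemxAr -scalerDr mulmx_sumr -big_split /=.
congr (_ *: _); apply: eq_bigr => l _.
by rewrite scaler0 addr0 mulrC -scalerA resolventE // -scalemxAr scalerDr.
Qed.

Lemma dft_trigpoly {p} N dt (v : nat -> 'M[R[i]]_(n, p)) k :
  (k < N)%N -> 0 < dt ->
  \sum_(j < N) cexpi (- (omega N (N%:R * dt) k * (j%:R * dt))) *:
    trigpoly (omega N (N%:R * dt)) N v (j%:R * dt) = v k.
Proof.
move=> kN dt0; rewrite /trigpoly.
under eq_bigr do rewrite scalerA mulrC -scalerA scaler_sumr.
rewrite -scaler_sumr exchange_big /=.
under eq_bigr => l _.
  under eq_bigr do rewrite scalerA.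
  rewrite -scaler_suml (sum_cexpi_omega N dt l k (ltn_ord l) kN dt0).
  over.
rewrite (bigD1 (Ordinal kN)) //= eqxx big1 => [|l /negbTE lk]; last first.
  by rewrite (_ : (l == k :> nat) = false) ?scale0r // -(inj_eq val_inj) lk.
by rewrite addr0 scalerA mulVf ?scale1r // pnatr_eq0 -lt0n (leq_ltn_trans _ kN).
Qed.

Lemma expmx_phase_shift A (w : R) s : 0 <= s ->
  cexpi (- (w * s)) *: expmx (s%:C *: A) = expmx (s%:C *: (A - (0 +i* w)%:M)).
Proof.
move=> s0; pose B := A - (0 +i* w)%:M.
pose Y t := cexpi (- w * t) *: expmx ((t - 0)%:C *: A).
have Y' t : has_mxderiv Y t (B *m Y t).
  apply: has_mxderiv_eq
    (has_mxderivZ (has_cderiv_cexpi (- w) t) (has_mxderiv_expmx A 0 t)) _.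
  rewrite /Y -scalemxAr /B mulmxBl mul_scalar_mx scalerBr scalerA addrC.
  by rewrite (_ : 0 +i* - w = - (0 +i* w)) ?mulNr ?scaleNr ?(mulrC (cexpi _)) //;
    apply/eqP; rewrite eq_complex /= oppr0 !eqxx.
have s1 : s <= s + 1 by rewrite lerDl.
have := linear_ode_solution s0 s1 (fun t _ => Y' t) (has_mxderiv_cont Y').
by rewrite /Y !subr0 expmx0 mulr0 cexpi0 scale1r mulmx1 mulNr.
Qed.

Lemma expmx_mulr_natl A dt j : 0 <= dt ->
  expmx ((j%:R * dt)%:C *: A) = expmx (dt%:C *: A) ^+ j.
Proof.
move=> dt0; elim: j => [|j IH]; first by rewrite mul0r expmx0 expr0.
have jdt : j%:R * dt <= j.+1%:R * dt by rewrite ler_wpM2r // ler_nat.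
have := linear_ode_solution jdt (lexx _) (fun s _ => has_mxderiv_expmx A 0 s)
  (has_mxderiv_cont (has_mxderiv_expmx A 0)).
rewrite !subr0 => ->; rewrite (_ : _ - _ = dt) ?IH ?exprS ?mulmxE //.
by rewrite -natr1; ring.
Qed.

(* With [F := expmx (dt *: (A - i w_k))] the sampled free response is
   [F ^+ j u0], and [F ^+ N = expmx (T *: A)] because [w_k T] is a multiple of
   [2 pi]. *)
Lemma dft_expmx_orbit A (u0 : 'cV[R[i]]_n) N dt k :
  (k < N)%N -> 0 < dt ->
  1%:M - expmx (dt%:C *: (A - (0 +i* omega N (N%:R * dt) k)%:M)) \in unitmx ->
  \sum_(j < N) cexpi (- (omega N (N%:R * dt) k * (j%:R * dt))) *:
    (expmx ((j%:R * dt)%:C *: A) *m u0) =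
  invmx (1%:M - expmx (dt%:C *: (A - (0 +i* omega N (N%:R * dt) k)%:M)))
    *m (1%:M - expmx ((N%:R * dt)%:C *: A)) *m u0.
Proof.
move=> kN dt0; set w := omega N (N%:R * dt).
set F := expmx (dt%:C *: (A - (0 +i* w k)%:M)) => unitF.
have t_ge0 (j : nat) : 0 <= j%:R * dt by rewrite mulr_ge0 // ltW.
have orbitE (j : nat) :
    cexpi (- (w k * (j%:R * dt))) *: expmx ((j%:R * dt)%:C *: A) = F ^+ j.
  by rewrite expmx_phase_shift ?t_ge0 // expmx_mulr_natl // ltW.
under eq_bigr do rewrite scalemxAl orbitE.
have FN : expmx ((N%:R * dt)%:C *: A) = F ^+ N.
  have T0 : 0 < N%:R * dt by rewrite mulr_gt0 // ltr0n (leq_ltn_trans _ kN).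
  by rewrite -orbitE omega_period ?lt0r_neq0 // scale1r.
rewrite -mulmx_suml FN; congr (_ *m _).
apply: (canRL (mulKmx unitF)); rewrite idmxE mulmxE.
by rewrite -opprB mulNr -subrX1 opprB.
Qed.

End ForcedLinearSystem.

Theorem mainTheorem1 (R : realType) (Nx Nw : nat) (dt : R)
  (A : 'M[R[i]]_Nx) (q0 : 'cV[R[i]]_Nx) (ghat : nat -> 'cV[R[i]]_Nx)
  (q : R -> 'cV[R[i]]_Nx) (k : nat) :
  (1 <= Nx)%N -> (1 <= Nw)%N -> 0 < dt ->
  let T := Nw%:R * dt in
  let t (j : nat) : R := j%:R * dt in
  let w (l : nat) : R := omega Nw T l in
  let g (s : R) : 'cV[R[i]]_Nx :=
    (Nw%:R)^-1 *: \sum_(l < Nw) (cexpi (w l * s) *: ghat l) in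
  q 0 = q0 ->
  (forall a : 'I_Nx, ccont_on `[0, T] (fun s => q s a 0)) ->
  (forall s, 0 < s < T -> forall a : 'I_Nx,
      has_cderiv (fun s' => q s' a 0) s ((A *m q s + g s) a 0)) ->
  (forall l : 'I_Nw, ((0 +i* w l)%:M - A) \in unitmx) ->
  let Rl (l : nat) : 'M[R[i]]_Nx := invmx ((0 +i* w l)%:M - A) in
  (k < Nw)%N ->
  (1%:M - expmx ((dt%:C) *: (A - (0 +i* w k)%:M))) \in unitmx ->
  \sum_(j < Nw) (cexpi (- (w k * t j)) *: q (t j)) =
    Rl k *m ghat k +
    invmx (1%:M - expmx ((dt%:C) *: (A - (0 +i* w k)%:M)))
      *m (1%:M - expmx (T%:C *: A))
      *m (q0 - (Nw%:R)^-1 *: \sum_(l < Nw) (Rl l *m ghat l)).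
Proof.
move=> _ _ dt0 T t w g q_0 q_cont q_deriv unit_res Rl kN unitF.
pose p := trigpoly w Nw (fun l => Rl l *m ghat l).
pose u s := q s - p s.
have q' s : 0 < s < T -> has_mxderiv q s (A *m q s + g s).
  by move=> sT a b; rewrite (ord1 b); exact: q_deriv.
have p' s : has_mxderiv p s (A *m p s + g s).
  exact: has_mxderiv_trigpoly_resolvent.
have u' s : 0 < s < T -> has_mxderiv u s (A *m u s).
  move=> sT; apply: has_mxderiv_eq (has_mxderivD (q' s sT) (has_mxderivN (p' s))) _.
  by rewrite mulmxBr opprD addrACA subrr addr0.
have u_cont : mxcont_on `[0, T] u.
  apply: mxcont_onD (mxcont_onN (has_mxderiv_cont p')).
  by move=> a b; rewrite (ord1 b); exact: q_cont.
have qE (j : 'I_Nw) : q (t j) = p (t j) + expmx ((t j)%:C *: A) *m u 0.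
  have tj_ge0 : 0 <= t j by rewrite mulr_ge0 // ltW.
  have tj_leT : t j <= T by rewrite ler_wpM2r ?ler_nat 1?ltnW // ltW.
  have := linear_ode_solution tj_ge0 tj_leT u' u_cont.
  by rewrite subr0 => <-; rewrite addrC subrK.
have u0E : u 0 = q0 - (Nw%:R)^-1 *: \sum_(l < Nw) (Rl l *m ghat l).
  rewrite /u q_0 /p /trigpoly; congr (_ - _ *: _).
  by apply: eq_bigr => l _; rewrite mulr0 cexpi0 scale1r.
under eq_bigr do rewrite qE scalerDr.
rewrite big_split /= (dft_trigpoly Nw dt (fun l => Rl l *m ghat l) k kN dt0).
by rewrite (dft_expmx_orbit A (u 0) Nw dt k kN dt0 unitF) -u0E.
Qed.
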